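(* In the setting below, consider a purely asymmetric configuration with $\lambda_{DA}$ the lexicographically strictly largest word. After one move by a robot according to Algorithm 2, $\lambda_{DA}$ remains strictly larger than each of $\lambda_{CD},\lambda_{AD},\lambda_{CB},\lambda_{AB},\lambda_{BA},\lambda_{BC}$.
   Context: Setting: $G$ is the $n\times n$ grid, $n$ even, configuration $f:V(G)\to\{0,1,2\}$ ($0$ empty, $1$ singleton, $2$ multiplicity = at least two robots; robots have only weak multiplicity detection), no corner occupied, at least one robot on the boundary. Corners $A,B,C,D$ with sides $DA,AB,BC,CD$. For adjacent corners $(X,Y)$, $\lambda_{XY}\in\{0,1,2\}^{n^2}$ reads $f$ along side $XY$ from $X$ to $Y$, then along successive parallel grid lines in order of increasing distance from $XY$, each in the same direction. Words compared lexicographically. Coordinates: when $\lambda_{DA}$ is strictly largest, node $(i,j)$ ($1\le i,j\le n$) is at distance $i-1$ from side $DC$ and $j-1$ from side $DA$; thus $D=(1,1)$, $A=(n,1)$, $C=(1,n)$, $B=(n,n)$, and $(i,j)$ is entry $n(j-1)+i$ of $\lambda_{DA}$. Asymmetric: $\lambda_{DA}$ strictly exceeds the other seven words. Second largest corner: whichever of $A,C$ starts the largest of $\lambda_{AB},\lambda_{AD},\lambda_{CB},\lambda_{CD}$. Almost symmetric of the first type: asymmetric, no multiplicities, a robot on $DC$, and $\lambda_{DA},\lambda_{DC}$ coincide after replacing each one's first nonzero entry by $0$. Almost symmetric of the second type: asymmetric, no multiplicities, and for the second largest corner $X$ with adjacent corners $Y,Z$, $\lambda_{XY},\lambda_{XZ}$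 coincide after replacing each one's first nonzero entry by $0$. Purely asymmetric: asymmetric and neither almost symmetric type. Leading duo of a purely asymmetric configuration: if the first nonzero entry of $\lambda_{DA}$ is $1$, the robots at the first two nonzero entries of $\lambda_{DA}$ (the first robot and the second robot); if it is $2$, the robots of that multiplicity. Algorithm 2: in a purely asymmetric configuration, each robot of the leading duo, located at $(i,j)$, moves to $(i-1,j)$ (along its column toward $D$) if $j=1$, or $j=2$ and $i>2$, or $i=n$ and $j\le n/2$; otherwise it moves to $(i,j-1)$ (along its row toward $D$). Other robots stay. *)

From mathcomp Require Import all_boot all_order.
Import Order.TTheory.

Set Implicit Arguments.
Unset Strict Implicit.
Unset Printing Implicit Defensive.

(* Nodes are pairs (i, j) with 1 <= i, j <= n (1-based, as in the paper):
   D = (1,1), A = (n,1), C = (1,n), B = (n,n).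
   Node (i,j) is at distance i-1 from side DC and j-1 from side DA. *)
Definition in_grid (n i j : nat) : bool := (1 <= i <= n) && (1 <= j <= n).

(* A configuration: f i j in {0,1,2} (0 empty, 1 singleton, 2 multiplicity). *)
Definition config := nat -> nat -> nat.

Definition lexlt (s t : seq nat) : bool := (s < t :> seqlexi nat)%O.
Definition lexle (s t : seq nat) : bool := (s <= t :> seqlexi nat)%O.

(* The eight words lambda_XY: line l (l-th parallel to side XY, l = 1 is XY),
   position p along the line (read in the direction from X to Y);
   the word is lines 1..n concatenated. *)
Section Words.
Variables (n : nat) (f : config).
Definition lamDA : seq nat := [seq f p l | l <- iota 1 n, p <- iota 1 n].
Definition lamDC : seq nat := [seq f l p | l <- iota 1 n, p <- iota 1 n].
Definition lamAD : seq nat := [seq f (n + 1 - p) l | l <- iota 1 n, p <- iota 1 n].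
Definition lamAB : seq nat := [seq f (n + 1 - l) p | l <- iota 1 n, p <- iota 1 n].
Definition lamBA : seq nat :=
  [seq f (n + 1 - l) (n + 1 - p) | l <- iota 1 n, p <- iota 1 n].
Definition lamBC : seq nat :=
  [seq f (n + 1 - p) (n + 1 - l) | l <- iota 1 n, p <- iota 1 n].
Definition lamCB : seq nat := [seq f p (n + 1 - l) | l <- iota 1 n, p <- iota 1 n].
Definition lamCD : seq nat := [seq f l (n + 1 - p) | l <- iota 1 n, p <- iota 1 n].
End Words.

Definition standing (n : nat) (f : config) : Prop :=
  [/\ f 1 1 = 0, f n 1 = 0, f 1 n = 0, f n n = 0 &
      exists i j, [&& in_grid n i j, [|| i == 1, i == n, j == 1 | j == n] & f i j != 0]].

Definition asymmetric (n : nat) (f : config) : bool :=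
  [&& lexlt (lamDC n f) (lamDA n f), lexlt (lamAD n f) (lamDA n f),
      lexlt (lamAB n f) (lamDA n f), lexlt (lamBA n f) (lamDA n f),
      lexlt (lamBC n f) (lamDA n f), lexlt (lamCB n f) (lamDA n f) &
      lexlt (lamCD n f) (lamDA n f)].

Definition no_mult (n : nat) (f : config) : bool := 2 \notin lamDA n f.

Fixpoint zero_first (s : seq nat) : seq nat :=
  match s with
  | [::] => [::]
  | x :: s' => if x == 0 then 0 :: zero_first s' else 0 :: s'
  end.

Definition almost_sym1 (n : nat) (f : config) : bool :=
  [&& asymmetric n f, no_mult n f,
      [exists j : 'I_n, f 1 j.+1 != 0] &
      zero_first (lamDA n f) == zero_first (lamDC n f)].

(* The second largest corner is A iff the largest of
   lambda_AB, lambda_AD, lambda_CB, lambda_CD starts at A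
   (in an asymmetric configuration these four words are pairwise distinct). *)
Definition second_is_A (n : nat) (f : config) : bool :=
  let m := [:: lamAB n f; lamAD n f; lamCB n f; lamCD n f] in
  all (fun w => lexle w (lamAB n f)) m || all (fun w => lexle w (lamAD n f)) m.

Definition almost_sym2 (n : nat) (f : config) : bool :=
  [&& asymmetric n f, no_mult n f &
      if second_is_A n f
      then zero_first (lamAB n f) == zero_first (lamAD n f)
      else zero_first (lamCB n f) == zero_first (lamCD n f)].

Definition purely_asym (n : nat) (f : config) : bool :=
  [&& asymmetric n f, ~~ almost_sym1 n f & ~~ almost_sym2 n f].

(* The node at (0-based) index k of lambda_DA: entry n(j-1)+i is node (i,j). *)
Definition node_of (n k : nat) : nat * nat := (k %% n + 1, k %/ n + 1).

(* Nodes hosting the leading duo: if the first nonzero entry of lambda_DA is 1,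
   the nodes of the first two nonzero entries; if it is 2, that node. *)
Definition duo_nodes (n : nat) (f : config) : seq (nat * nat) :=
  let s := lamDA n f in
  let k1 := find (fun x => x != 0) s in
  let k2 := k1.+1 + find (fun x => x != 0) (drop k1.+1 s) in
  if nth 0 s k1 == 1 then [:: node_of n k1; node_of n k2] else [:: node_of n k1].

(* Algorithm 2: destination of a leading-duo robot at (i,j). *)
Definition dest (n : nat) (u : nat * nat) : nat * nat :=
  let: (i, j) := u in
  if [|| j == 1, (j == 2) && (2 < i) | (i == n) && (j <= n./2)]
  then (i.-1, j) else (i, j.-1).

(* Exact robot counts c; robots have weak multiplicity detection, so the
   configuration they see is min(c, 2). *)
Definition view (c : nat -> nat -> nat) : config := fun i j => minn (c i j) 2.

Definition move_robot (c : nat -> nat -> nat) (u v : nat * nat) : nat -> nat -> nat :=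
  fun i j => c i j - ((i, j) == u) + ((i, j) == v).

(* Asymmetry means that every other word first drops below lambda_DA at some
   position T.  As lambda_DA reads only zeros before the first robot, so does
   every other word, i.e. every reading meets all robots at or after the place
   where DA meets the first one.  The robot of the leading duo moves towards D,
   so DA now reads it earlier than before, while a case check on Algorithm 2
   (n even) shows that every rival reads its new cell late enough.  Comparing
   the words at the earlier of T and the new DA-position of the robot then
   shows that each rival still loses.  The one exception is the step from
   (n, n/2 + 1) to (n, n/2) with the first robot at (n/2, 1): there AB reads
   the moved robot exactly where DA reads the first one, and the words only
   separate when DA reaches the moved robot. *)

From HB Require Import structures.
From mathcomp Require Import all_boot all_order zify.
Set Implicit Arguments. Unset Strict Implicit. Unset Printing Implicit Defensive.

Lemma lexlt_cons x s y t :
  lexlt (x :: s) (y :: t) = (x < y) || ((x == y) && lexlt s t).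
Proof. by rewrite /lexlt ltxi_cons !leEnat; case: ltngtP. Qed.

Lemma lexlt_first_diff s t : size s = size t ->
  lexlt s t <-> exists2 k, k < size s &
    (forall j, j < k -> nth 0 s j = nth 0 t j) /\ nth 0 s k < nth 0 t k.
Proof.
elim: s t => [|x s IH] [|y t] //=; first by split => [|[]].
move=> [/IH {}IH]; rewrite lexlt_cons; split.
- case/orP => [lt_xy|/andP[/eqP-> /IH[k lt_ks [eq_pre lt_k]]]].
    by exists 0 => //; split=> // j.
  by exists k.+1 => //; split=> // -[|j] //= /eq_pre.
- case=> -[|k] /= lt_ks [eq_pre lt_k]; first by rewrite lt_k.
  have /= -> := eq_pre 0 isT; rewrite eqxx ltnn /=; apply/IH; exists k => //.
  by split=> // j lt_jk; apply: (eq_pre j.+1).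
Qed.

Lemma lexlt_zero_prefix s t k : size s = size t ->
  (forall j, j <= k -> nth 0 s j = 0) ->
  (exists2 j, j <= k /\ j < size t & nth 0 t j != 0) -> lexlt s t.
Proof.
elim: s t k => [|x s IH] [|y t] k //=; first by move=> _ _ [j []].
move=> [size_st] zero_s [j [le_jk lt_jt] nz_j]; rewrite lexlt_cons.
have /= -> := zero_s 0 isT; case: y nz_j => [|y] //; case: j le_jk lt_jt => [|j] //.
case: k zero_s => [|k] // zero_s le_jk lt_jt nz_j /=.
apply: (IH t k size_st) => [i le_ik|]; first exact: (zero_s i.+1).
by exists j.
Qed.

Lemma nth_allpairs (S U T : Type) (F : S -> U -> T) x0 s0 u0 (s : seq S) (t : seq U) q r :
  q < size s -> r < size t ->
  nth x0 [seq F x y | x <- s, y <- t] (q * size t + r) = F (nth s0 s q) (nth u0 t r).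
Proof.
move=> + lt_rt; elim: s q => [|x s IH] [|q] //= lt_qs.
  by rewrite nth_cat size_map lt_rt (nth_map u0).
rewrite nth_cat size_map mulSn -addnA ltnNge leq_addr /= addKn.
exact: IH.
Qed.

Definition grid_word (n : nat) (h : config) : seq nat :=
  [seq h p l | l <- iota 1 n, p <- iota 1 n].

Definition pos_index (n l p : nat) : nat := l.-1 * n + p.-1.

(* Positions are pairs (line, place) in reading order; the reading DA visits
   cell (i, j) at position (j, i). *)
Definition pos_lt (l p l' p' : nat) : bool := (l < l') || ((l == l') && (p < p')).

Ltac grid_lia := rewrite ?xpair_eqE; unfold pos_lt, in_grid in *; lia.

Section GridWord.
Variable n : nat.
Implicit Types (h : config) (l p : nat).

Lemma size_grid_word h : size (grid_word n h) = n * n.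
Proof. by rewrite size_allpairs size_iota. Qed.

Lemma nth_grid_word h l p : in_grid n l p -> nth 0 (grid_word n h) (pos_index n l p) = h p l.
Proof.
move=> lp; have [lt_l lt_p] : l.-1 < n /\ p.-1 < n by grid_lia.
have := @nth_allpairs _ _ _ (fun l p => h p l) 0 0 0 (iota 1 n) (iota 1 n) l.-1 p.-1.
rewrite size_iota !nth_iota // => -> //.
by congr h; grid_lia.
Qed.

Lemma pos_index_bound l p : in_grid n l p -> pos_index n l p < n * n.
Proof.
move=> lp; have : l.-1.+1 * n <= n * n by apply: leq_mul; grid_lia.
by rewrite /pos_index mulSn; move: (l.-1 * n) (n * n); grid_lia.
Qed.

Lemma pos_index_lt l p l' p' : in_grid n l p -> in_grid n l' p' ->
  (pos_index n l p < pos_index n l' p') = pos_lt l p l' p'.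
Proof.
have shift a b q : a < b -> 0 < q <= n -> a * n + q.-1 < b * n.
  move=> lt_ab q_in; have : a.+1 * n <= b * n by apply: leq_mul.
  by rewrite mulSn; move: (a * n) (b * n); lia.
move=> lp lp'; rewrite /pos_index /pos_lt.
case: (ltngtP l l') => [lt_l|lt_l|<-] /=.
- by apply: ltn_addr; apply: shift; grid_lia.
- by apply/negbTE; rewrite -leqNgt ltnW // ltn_addr // shift //; grid_lia.
- by grid_lia.
Qed.

Lemma pos_index_surj k : k < n * n ->
  exists l p, in_grid n l p /\ k = pos_index n l p.
Proof.
move=> lt_k; have n_gt0 : 0 < n by move: lt_k; rewrite lt0n; apply: contraTneq => ->.
exists (k %/ n).+1, (k %% n).+1; split; last by rewrite /pos_index /= -divn_eq.
by rewrite /in_grid /= ltn_pmod // andbT ltn_divLR.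
Qed.

Lemma node_of_pos_index l p : in_grid n l p -> node_of n (pos_index n l p) = (p, l).
Proof.
move=> /andP[/andP[l_gt0 _] /andP[p_gt0 le_pn]].
rewrite /node_of /pos_index modnMDl modn_small ?divnMDl ?divn_small; try lia.
by rewrite addn0 !addn1 !prednK.
Qed.

Lemma grid_word_ltP h1 h2 : lexlt (grid_word n h1) (grid_word n h2) <->
  exists l p, [/\ in_grid n l p,
    forall l' p', in_grid n l' p' -> pos_lt l' p' l p -> h1 p' l' = h2 p' l' &
    h1 p l < h2 p l].
Proof.
rewrite lexlt_first_diff ?size_grid_word //; split.
- move=> [_ /pos_index_surj[l [p [lp ->]]] [eq_pre lt_at]].
  exists l, p; split=> [//|l' p' lp' lt'|].
    by rewrite -(nth_grid_word h1 lp') -(nth_grid_word h2 lp') eq_pre ?pos_index_lt.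
  by rewrite -(nth_grid_word h1 lp) -(nth_grid_word h2 lp).
- move=> [l [p [lp eq_pre lt_at]]]; exists (pos_index n l p); first exact: pos_index_bound.
  split; last by rewrite !nth_grid_word.
  move=> k lt_k; have /pos_index_surj[l' [p' [lp' Ek]]] :=
    ltn_trans lt_k (pos_index_bound lp).
  by move: lt_k; rewrite Ek pos_index_lt // => lt'; rewrite !nth_grid_word // eq_pre.
Qed.

Lemma grid_word_lt_zero_prefix h1 h2 l p : in_grid n l p ->
  (forall l' p', in_grid n l' p' -> ~~ pos_lt l p l' p' -> h1 p' l' = 0) ->
  h2 p l != 0 -> lexlt (grid_word n h1) (grid_word n h2).
Proof.
move=> lp zero_pre nz; apply: (@lexlt_zero_prefix _ _ (pos_index n l p)).
- by rewrite !size_grid_word.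
- move=> k le_k; have /pos_index_surj[l' [p' [lp' Ek]]] :=
    leq_ltn_trans le_k (pos_index_bound lp).
  rewrite Ek nth_grid_word // zero_pre //; move: le_k.
  by rewrite Ek leqNgt pos_index_lt.
- exists (pos_index n l p); last by rewrite nth_grid_word.
  by rewrite size_grid_word pos_index_bound.
Qed.

End GridWord.

Inductive reading := DA | DC | AD | AB | BA | BC | CB | CD.
Scheme Equality for reading.
HB.instance Definition _ := hasDecEq.Build reading (compareP reading_eq_dec).

Section Readings.
Variable n : nat.

Definition cell_i r l p := match r with
  | DA | CB => p | DC | CD => l | AD | BC => n + 1 - p | AB | BA => n + 1 - l end.
Definition cell_j r l p := match r with
  | DA | AD => l | DC | AB => p | BA | CD => n + 1 - p | BC | CB => n + 1 - l end.
Definition pos_l r i j := match r with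
  | DA | AD => j | DC | CD => i | AB | BA => n + 1 - i | BC | CB => n + 1 - j end.
Definition pos_p r i j := match r with
  | DA | CB => i | DC | AB => j | AD | BC => n + 1 - i | BA | CD => n + 1 - j end.

Definition entry r (f : config) l p := f (cell_i r l p) (cell_j r l p).

(* [word r f] is convertible to the word [lamXY n f] of the reading [r = XY]. *)
Definition word r f := grid_word n (fun p l => entry r f l p).

Lemma cell_in_grid r l p : in_grid n l p -> in_grid n (cell_i r l p) (cell_j r l p).
Proof. by case: r; rewrite /in_grid /=; lia. Qed.

Lemma pos_in_grid r i j : in_grid n i j -> in_grid n (pos_l r i j) (pos_p r i j).
Proof. by case: r; rewrite /in_grid /=; lia. Qed.

Lemma entry_pos r f i j : in_grid n i j -> entry r f (pos_l r i j) (pos_p r i j) = f i j.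
Proof. by rewrite /entry; case: r; rewrite /in_grid /= => ij; congr f; lia. Qed.

Lemma pos_cell r l p : in_grid n l p ->
  pos_l r (cell_i r l p) (cell_j r l p) = l /\ pos_p r (cell_i r l p) (cell_j r l p) = p.
Proof. by case: r; rewrite /in_grid /=; lia. Qed.

Lemma pos_inj r i j i' j' : in_grid n i j -> in_grid n i' j' ->
  pos_l r i j = pos_l r i' j' -> pos_p r i j = pos_p r i' j' -> i = i' /\ j = j'.
Proof. by case: r; rewrite /in_grid /=; lia. Qed.

Lemma cell_eqE r l p i j : in_grid n l p -> in_grid n i j ->
  ((cell_i r l p, cell_j r l p) == (i, j)) = ((pos_l r i j, pos_p r i j) == (l, p)).
Proof. by rewrite !xpair_eqE; case: r; rewrite /in_grid /= => lp ij; apply/idP/idP; lia. Qed.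

Definition lt_witness r (f g : config) l p := [/\ in_grid n l p,
  forall l' p', in_grid n l' p' -> pos_lt l' p' l p -> entry r f l' p' = g p' l' &
  entry r f l p < g p l].

Lemma word_ltP r f g : lexlt (word r f) (word DA g) <-> exists l p, lt_witness r f g l p.
Proof. by rewrite grid_word_ltP; split=> -[l [p [? ? ?]]]; exists l, p. Qed.

Lemma asymmetric_witness f r : asymmetric n f -> r != DA ->
  exists l p, lt_witness r f f l p.
Proof.
case/and4P=> ltDC ltAD ltAB /and4P[ltBA ltBC ltCB ltCD].
by case: r => // _; apply/word_ltP.
Qed.

End Readings.

Definition empty_before n (f : config) l p :=
  forall i j, in_grid n i j -> pos_lt j i l p -> f i j = 0.

Definition empty_between n (f : config) l p l' p' :=
  forall i j, in_grid n i j -> pos_lt l p j i -> pos_lt j i l' p' -> f i j = 0.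

Section LeadingZeros.
Variables (n : nat) (f : config) (L P : nat).
Hypothesis f_empty : empty_before n f L P.

Lemma witness_not_before r l p : lt_witness n r f f l p -> ~~ pos_lt l p L P.
Proof.
case=> lp _ lt_at; apply/negP => lt.
by move: lt_at; rewrite f_empty //; grid_lia.
Qed.

Lemma robot_not_before r l p i j : lt_witness n r f f l p -> in_grid n i j -> f i j != 0 ->
  ~~ pos_lt (pos_l n r i j) (pos_p n r i j) L P.
Proof.
move=> wit ij; have le_LT := witness_not_before wit; case: wit => lp agree _.
have := pos_in_grid r ij; set l' := pos_l n r i j; set p' := pos_p n r i j => lp'.
apply: contraNN => lt; rewrite -(entry_pos r f ij) agree //; last by grid_lia.
by rewrite f_empty //; grid_lia.
Qed.

End LeadingZeros.

Section SingletonLeader.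
Variables (n : nat) (f : config) (P : nat).
Hypotheses (first_in : in_grid n P 1) (first_one : f P 1 = 1).
Hypothesis f_empty : empty_before n f 1 P.

Lemma witness_at_first r l p : lt_witness n r f f l p -> entry n r f 1 P = 0 -> l = 1 /\ p = P.
Proof.
move=> wit zero; have le_1T := witness_not_before f_empty wit; case: wit => lp agree _.
have [lt_1T|] := boolP (pos_lt 1 P l p); last by grid_lia.
by move: zero; rewrite agree ?first_one //; grid_lia.
Qed.

Variables u1 u2 : nat.
Hypotheses (first_before_u : pos_lt 1 P u2 u1) (between : empty_between n f 1 P u2 u1).

Lemma witness_tie r l p : lt_witness n r f f l p -> entry n r f 1 P != 0 ->
  [/\ ~~ pos_lt l p u2 u1, entry n r f 1 P = 1 &
      forall i j, in_grid n i j -> f i j != 0 ->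
        (pos_l n r i j, pos_p n r i j) != (1, P) ->
        ~~ pos_lt (pos_l n r i j) (pos_p n r i j) u2 u1].
Proof.
move=> wit nz; have robot_after := robot_not_before f_empty wit.
have le_1T := witness_not_before f_empty wit; case: wit => lp agree lt_at.
have lt_1T : pos_lt 1 P l p.
  have [//|le_T1] := boolP (pos_lt 1 P l p).
  have [el ep] : l = 1 /\ p = P by grid_lia.
  by move: lt_at nz; rewrite el ep; rewrite first_one; case: entry.
have entry_first : entry n r f 1 P = 1 by rewrite agree //; grid_lia.
have le_uT : ~~ pos_lt l p u2 u1.
  by apply/negP => lt; move: lt_at; rewrite between //; grid_lia.
split=> // i j ij nz_ij ne; have := pos_in_grid r ij.
have := robot_after _ _ ij nz_ij; rewrite xpair_eqE in ne.
set l' := pos_l n r i j in ne *; set p' := pos_p n r i j in ne * => le_1' lp'.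
apply: contraNN nz_ij => lt; rewrite -(entry_pos r f ij) agree; last 2 first.
- by grid_lia.
- by grid_lia.
by rewrite between //; grid_lia.
Qed.

End SingletonLeader.

Section Move.
Variables (c : nat -> nat -> nat) (u v : nat * nat).
Let g := view (move_robot c u v).

Lemma view_move_other i j : (i, j) != u -> (i, j) != v -> g i j = view c i j.
Proof. by rewrite /g /view /move_robot => /negbTE-> /negbTE->; rewrite subn0 addn0. Qed.

Lemma view_move_src : u != v -> g u.1 u.2 = minn (c u.1 u.2 - 1) 2.
Proof. by rewrite /g /view /move_robot -surjective_pairing eqxx => /negbTE->; rewrite addn0. Qed.

Lemma view_move_dst : u != v -> g v.1 v.2 = minn (c v.1 v.2 + 1) 2.
Proof.
by rewrite /g /view /move_robot -surjective_pairing eqxx eq_sym => /negbTE->; rewrite subn0.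
Qed.

End Move.

Lemma word_lt_of_vacant_prefix n r (g : config) l p : in_grid n l p ->
  (forall i j, in_grid n i j -> ~~ pos_lt l p (pos_l n r i j) (pos_p n r i j) -> g i j = 0) ->
  g p l != 0 -> lexlt (word n r g) (word n DA g).
Proof.
move=> lp vacant; apply: grid_word_lt_zero_prefix lp _ => l' p' lp' le'.
apply: vacant; first exact: cell_in_grid.
by have [-> ->] := pos_cell r lp'.
Qed.

Section MoveComparison.
Variables (n : nat) (r : reading) (f g : config) (u1 u2 v1 v2 : nat).
Hypotheses (u_in : in_grid n u1 u2) (v_in : in_grid n v1 v2).
Hypothesis frame :
  forall i j, in_grid n i j -> (i, j) != (u1, u2) -> (i, j) != (v1, v2) -> g i j = f i j.
Hypotheses (src_le : g u1 u2 <= f u1 u2) (dst_gt : f v1 v2 < g v1 v2).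
Hypothesis dst_before_src : pos_lt v2 v1 u2 u1.

(* The decisive position [S] is the earlier of the old first difference [T]
   and the position of the destination in the reading DA. *)
Lemma word_lt_after_move Tl Tp Sl Sp :
  lt_witness n r f f Tl Tp -> in_grid n Sl Sp ->
  (Sl = Tl /\ Sp = Tp /\ pos_lt Tl Tp v2 v1) \/ (Sl = v2 /\ Sp = v1 /\ ~~ pos_lt Tl Tp v2 v1) ->
  ~~ pos_lt (pos_l n r u1 u2) (pos_p n r u1 u2) Sl Sp ->
  pos_lt Sl Sp (pos_l n r v1 v2) (pos_p n r v1 v2) ->
  lexlt (word n r g) (word n DA g).
Proof.
move=> [lT agree lt_T] lS S_case le_uS lt_Sv.
apply/word_ltP; exists Sl, Sp; split=> // [l p lp lt|].
  have cell_in := cell_in_grid r lp.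
  rewrite [g p l]frame -?agree; try by grid_lia.
  by rewrite /entry frame ?cell_eqE //; grid_lia.
have le_S : entry n r g Sl Sp <= entry n r f Sl Sp.
  rewrite /entry; case: ((cell_i n r Sl Sp, cell_j n r Sl Sp) =P (u1, u2)) => [[-> ->] //|ne_u].
  by rewrite frame ?cell_in_grid //; [apply/eqP | rewrite cell_eqE //; grid_lia].
apply: leq_ltn_trans le_S _.
case: S_case => [[-> [-> lt_Tv]] | [-> [-> le_vT]]]; first by rewrite frame //; grid_lia.
apply: leq_ltn_trans dst_gt.
have [lt_vT|le_Tv] := boolP (pos_lt v2 v1 Tl Tp); first by rewrite agree //; grid_lia.
have [eTl eTp] : Tl = v2 /\ Tp = v1 by grid_lia.
by move: lt_T; rewrite eTl eTp; apply: ltnW.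
Qed.

End MoveComparison.

(* AB reads the moved robot at [(n, h)] where DA reads the first robot, and
   the words separate at position [(h, n)], where DA reads the moved robot. *)
Lemma special_AB_lt n h (f g : config) :
  n = h + h -> 1 < h -> f h 1 = 1 ->
  empty_before n f 1 h -> empty_between n f 1 h (h + 1) n ->
  (forall i j, in_grid n i j -> f i j != 0 -> (pos_l n BA i j, pos_p n BA i j) != (1, h) ->
     ~~ pos_lt (pos_l n BA i j) (pos_p n BA i j) (h + 1) n) ->
  (forall i j, in_grid n i j -> (i, j) != (n, h + 1) -> (i, j) != (n, h) -> g i j = f i j) ->
  g n (h + 1) = 0 -> g n h = 1 ->
  lexlt (word n AB g) (word n DA g).
Proof.
move=> n_even h_gt1 first_one f_empty between BA_late frame g_src g_dst.
have AB_vacant i j : in_grid n i j -> f i j != 0 -> (i, j) != (n, h + 1) -> h < i -> False.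
  move=> ij nz ne lt_hi; have := BA_late i j ij nz; rewrite /=.
  by move: ne; rewrite !xpair_eqE; grid_lia.
apply/word_ltP; exists h, n; split; first by grid_lia.
- move=> l p lp lt; rewrite /entry /=.
  have [[-> ->]|ne_first] := altP ((l, p) =P (1, h)).
    by rewrite addnK g_dst frame ?first_one //; grid_lia.
  rewrite [g p l]frame; try by move: ne_first; grid_lia.
  have -> : f p l = 0.
    have [lt_first|le_first] := boolP (pos_lt l p 1 h); first by apply: f_empty => //; grid_lia.
    by apply: between => //; move: ne_first; grid_lia.
  have [[-> ->]|ne_src] := altP ((l, p) =P (1, h + 1)).
    by rewrite addnK g_src.
  rewrite frame; try by move: ne_first ne_src; grid_lia.
  apply/eqP; apply: contraT => nz; case: (AB_vacant _ _ _ nz); try by grid_lia.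
  by move: ne_src; grid_lia.
- rewrite /entry /= g_dst frame; try by grid_lia.
  rewrite ltnS leqn0; apply: contraT => nz; case: (AB_vacant _ _ _ nz); grid_lia.
Qed.

Section LeadingDuo.
Variables (n : nat) (f : config).
Local Notation nonzero := (fun x : nat => x != 0).

Lemma find_nonzero_from k0 l p : in_grid n l p ->
  k0 + find nonzero (drop k0 (lamDA n f)) = pos_index n l p ->
  f p l != 0 /\ forall i j, in_grid n i j -> k0 <= pos_index n j i -> pos_lt j i l p -> f i j = 0.
Proof.
move=> lp Ek; have lt_k : pos_index n l p < size (lamDA n f).
  by rewrite size_grid_word pos_index_bound.
split.
  have k0_le : k0 <= size (lamDA n f) by move: lt_k; rewrite -Ek; lia.
  have has_nz : has nonzero (drop k0 (lamDA n f)).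
    by rewrite has_find size_drop; move: lt_k; rewrite -Ek; lia.
  by have := nth_find 0 has_nz; rewrite nth_drop Ek nth_grid_word.
move=> i j ij le_k0 lt_jp; have ji : in_grid n j i by grid_lia.
have lt_jk : pos_index n j i - k0 < find nonzero (drop k0 (lamDA n f)).
  by move: lt_jp; rewrite -(pos_index_lt ji lp) -Ek; lia.
by have := before_find 0 lt_jk; rewrite nth_drop subnKC // nth_grid_word // => /negbFE/eqP.
Qed.

Lemma first_robot_exists i j : in_grid n i j -> f i j != 0 ->
  exists l p, [/\ in_grid n l p, f p l != 0, empty_before n f l p &
                   find nonzero (lamDA n f) = pos_index n l p].
Proof.
move=> ij nz; have ji : in_grid n j i by grid_lia.
have has_nz : has nonzero (lamDA n f).
  apply/(has_nthP 0); exists (pos_index n j i); last by rewrite nth_grid_word.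
  by rewrite size_grid_word pos_index_bound.
have := has_nz; rewrite has_find size_grid_word => /pos_index_surj[l [p [lp Ek]]].
have := @find_nonzero_from 0 l p lp; rewrite drop0 => /(_ Ek)[nz_lp before].
by exists l, p; split=> // i' j' ij'; apply: before.
Qed.

Lemma duo_nodesP p1 u : in_grid n 1 p1 -> find nonzero (lamDA n f) = pos_index n 1 p1 ->
  in_grid n u.1 u.2 -> u \in duo_nodes n f ->
  u = (p1, 1) \/ [/\ f p1 1 = 1, pos_lt 1 p1 u.2 u.1 & empty_between n f 1 p1 u.2 u.1].
Proof.
move=> first_in Ek u_in; rewrite /duo_nodes Ek nth_grid_word // node_of_pos_index //.
case: ifP => [/eqP first_one|_]; rewrite !inE; last by move/eqP; left.
case/orP=> /eqP u_second; [by left | right].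
move: u_second; set k := _ + find _ _ => u_second.
have lt_k : k < n * n.
  move: u_in; rewrite u_second /node_of /in_grid /= => /andP[/andP[_ lt_mod] /andP[_ lt_div]].
  by rewrite -ltn_divLR; lia.
have [l2 [p2 [lp2 Ek2]]] := pos_index_surj lt_k.
have [_ between] := find_nonzero_from lp2 Ek2.
have first_before : pos_lt 1 p1 l2 p2.
  by rewrite -(pos_index_lt first_in lp2) -Ek2 /k; lia.
rewrite u_second Ek2 node_of_pos_index //=; split=> // i j ij lt1 lt2.
have ji : in_grid n j i by grid_lia.
by apply: between => //; move: lt1; rewrite -(pos_index_lt first_in ji).
Qed.

End LeadingDuo.

(* The boundary robot forces the first robot onto side DA, the empty corners
   keep it off them, and comparing with AD puts it in the half nearer to D. *)
Lemma leading_robot_position n f l p : standing n f -> asymmetric n f ->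
  in_grid n l p -> f p l != 0 -> empty_before n f l p ->
  [/\ l = 1, 1 < p < n & p + p <= n + 1].
Proof.
case=> f11 fn1 f1n fnn [i [j /and3P[ij boundary nz]]] asym lp nz_first before.
have late r i' j' : r != DA -> in_grid n i' j' -> f i' j' != 0 ->
    ~~ pos_lt (pos_l n r i' j') (pos_p n r i' j') l p.
  by move=> /(asymmetric_witness asym)[Tl [Tp wit]]; apply: robot_not_before wit.
have l1 : l = 1.
  case/or4P: boundary => /eqP Eb.
  - by have := late DC i j isT ij nz; rewrite /= Eb; grid_lia.
  - by have := late AB i j isT ij nz; rewrite /= Eb; grid_lia.
  - by apply: contraNeq nz => l_ne1; rewrite before // Eb; grid_lia.
  - by have := late CB i j isT ij nz; rewrite /= Eb; grid_lia.
subst l; have p_range : 1 < p < n.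
  have p_ne1 : p != 1 by apply: contraNneq nz_first => ->; rewrite f11.
  have p_neN : p != n by apply: contraNneq nz_first => ->; rewrite fn1.
  by move: p_ne1 p_neN; grid_lia.
by split=> //; have /= := late AD p 1 isT _ nz_first; grid_lia.
Qed.

Definition after_move n c u : config := view (move_robot c u (dest n u)).

Lemma first_robot_move n c p1 r :
  asymmetric n (view c) -> empty_before n (view c) 1 p1 -> view c p1 1 != 0 ->
  1 < p1 < n -> p1 + p1 <= n + 1 -> r \notin [:: DA; DC] ->
  lexlt (word n r (after_move n c (p1, 1))) (word n DA (after_move n c (p1, 1))).
Proof.
set f := view c; set g := after_move n c (p1, 1) => asym f_empty nz p1_range p1_low rival.
have dE : dest n (p1, 1) = (p1.-1, 1) by rewrite /dest eqxx.
have ne_uv : (p1, 1) != (p1.-1, 1) by rewrite xpair_eqE; grid_lia.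
have first_in : in_grid n p1 1 by grid_lia.
have dst_in : in_grid n p1.-1 1 by grid_lia.
have frame i j : in_grid n i j -> (i, j) != (p1, 1) -> (i, j) != (p1.-1, 1) -> g i j = f i j.
  by move=> _; rewrite /g /after_move dE; apply: view_move_other.
have src_le : g p1 1 <= f p1 1.
  by rewrite /g /after_move dE (view_move_src c ne_uv) /f /view /=; lia.
have dst_gt : f p1.-1 1 < g p1.-1 1.
  have f_dst : f p1.-1 1 = 0 by apply: f_empty; grid_lia.
  by rewrite /g /after_move dE (view_move_dst c ne_uv) f_dst; move: f_dst; rewrite /f /view; lia.
have [Tl [Tp wit]] : exists l p, lt_witness n r f f l p.
  by apply: asymmetric_witness asym _; case: r rival.
apply: (word_lt_after_move first_in dst_in frame src_le dst_gt _ wit (Sl := 1) (Sp := p1.-1)).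
- by grid_lia.
- by grid_lia.
- by right; have := witness_not_before f_empty wit; grid_lia.
- by have := robot_not_before f_empty wit first_in nz; grid_lia.
- by case: r rival wit => //= _ _; grid_lia.
Qed.

Section SecondRobotMove.
Variables (n h : nat) (c : nat -> nat -> nat) (p1 p2 l2 : nat).
Local Notation f := (view c).
Local Notation g := (after_move n c (p2, l2)).
Local Notation v1 := (dest n (p2, l2)).1.
Local Notation v2 := (dest n (p2, l2)).2.

Hypotheses (n_even : n = h + h) (asym : asymmetric n f).
Hypotheses (f_empty : empty_before n f 1 p1) (first_one : f p1 1 = 1).
Hypotheses (p1_range : 1 < p1 < n) (p1_low : p1 + p1 <= n + 1).
Hypotheses (u_in : in_grid n p2 l2) (u_not_corner : 1 < p2 < n \/ 1 < l2 < n).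
Hypothesis u_occupied : f p2 l2 != 0.
Hypotheses (first_before_u : pos_lt 1 p1 l2 p2) (between : empty_between n f 1 p1 l2 p2).

Lemma dest_spec :
  [|| l2 == 1, (l2 == 2) && (2 < p2) | (p2 == n) && (l2 <= h)] /\ v1 = p2.-1 /\ v2 = l2 \/
  ~~ [|| l2 == 1, (l2 == 2) && (2 < p2) | (p2 == n) && (l2 <= h)] /\ v1 = p2 /\ v2 = l2.-1.
Proof.
rewrite /dest (_ : n./2 = h); last by rewrite n_even addnn doubleK.
by case: ifP => C; [left | right; rewrite ?C].
Qed.

Ltac dest_lia :=
  case: dest_spec => [[/or3P[?|/andP[? ?]|/andP[? ?]] [-> ->]] | [? [-> ->]]]; grid_lia.

Lemma dest_in_grid : in_grid n v1 v2.
Proof. by dest_lia. Qed.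

Lemma dest_before_src : pos_lt v2 v1 l2 p2.
Proof. by dest_lia. Qed.

Lemma first_pos_ne r : r \notin [:: DA; DC] -> (pos_l n r p1 1, pos_p n r p1 1) != (1, p1).
Proof. by case: r => //= _; grid_lia. Qed.

Lemma dest_read_after_min r : r \notin [:: DA; DC] ->
  ~~ [&& r == AB, p1 == h, p2 == n & l2 == h + 1] ->
  pos_lt 1 p1 (pos_l n r p2 l2) (pos_p n r p2 l2) ->
  pos_lt 1 p1 (pos_l n r v1 v2) (pos_p n r v1 v2) ||
  pos_lt v2 v1 (pos_l n r v1 v2) (pos_p n r v1 v2).
Proof. by case: r => //= _; dest_lia. Qed.

Lemma dest_read_after_dest r : r \notin [:: DA; DC] ->
  ~~ pos_lt (pos_l n r p2 l2) (pos_p n r p2 l2) l2 p2 ->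
  ~~ pos_lt (pos_l n r p1 1) (pos_p n r p1 1) l2 p2 ->
  (pos_l n r p2 l2, pos_p n r p2 l2) != (1, p1) ->
  pos_lt v2 v1 (pos_l n r v1 v2) (pos_p n r v1 v2).
Proof. by rewrite xpair_eqE; case: r => //= _; dest_lia. Qed.

Lemma dest_read_after_first r : r \notin [:: DA; DC] ->
  pos_l n r p2 l2 = 1 -> pos_p n r p2 l2 = p1 ->
  pos_lt 1 p1 (pos_l n r v1 v2) (pos_p n r v1 v2).
Proof. by case: r => //= _; dest_lia. Qed.

Let v_in := dest_in_grid.
Let v_before_u := dest_before_src.
Let first_in : in_grid n p1 1. Proof. by grid_lia. Qed.
Let ne_uv : (p2, l2) != dest n (p2, l2).
Proof. by rewrite [dest _ _]surjective_pairing xpair_eqE; move: v_before_u; grid_lia. Qed.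

Let frame i j : in_grid n i j -> (i, j) != (p2, l2) -> (i, j) != (v1, v2) -> g i j = f i j.
Proof. by move=> _ ne_u ne_v; apply: view_move_other; rewrite // [dest _ _]surjective_pairing. Qed.

Let src_le : g p2 l2 <= f p2 l2.
Proof. by rewrite /after_move (view_move_src c ne_uv) /view /=; lia. Qed.

Let src_vacated : f p2 l2 = 1 -> g p2 l2 = 0.
Proof. by rewrite /after_move (view_move_src c ne_uv) /view /=; lia. Qed.

Let dst_gt : f v1 v2 < g v1 v2.
Proof.
have f_dst : f v1 v2 <= 1.
  have [[-> ->]|ne_first] := altP ((v1, v2) =P (p1, 1)); first by rewrite first_one.
  have [lt_first|le_first] := boolP (pos_lt v2 v1 1 p1); first by rewrite f_empty.
  by rewrite between //; move: ne_first; grid_lia.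
rewrite /after_move (view_move_dst c ne_uv).
by move: f_dst; rewrite /view; lia.
Qed.

Let first_kept : 0 < g p1 1.
Proof.
have [[e1 e2]|ne_v] := altP ((p1, 1) =P (v1, v2)).
  by move: dst_gt; rewrite -e1 -e2; lia.
by rewrite frame ?first_one //; move: first_before_u; grid_lia.
Qed.

Let lt_first_unmatched r Tl Tp : r \notin [:: DA; DC] -> lt_witness n r f f Tl Tp ->
  ~~ [&& r == AB, p1 == h, p2 == n & l2 == h + 1] -> entry n r f 1 p1 = 0 ->
  lexlt (word n r g) (word n DA g).
Proof.
move=> rival wit not_special zero.
have [eTl eTp] := witness_at_first first_in first_one f_empty wit zero; subst Tl Tp.
have u_late : pos_lt 1 p1 (pos_l n r p2 l2) (pos_p n r p2 l2).
  have ne : (pos_l n r p2 l2, pos_p n r p2 l2) != (1, p1).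
    by apply: contraNneq u_occupied => -[el ep]; rewrite -(entry_pos r f u_in) el ep zero.
  by move: (robot_not_before f_empty wit u_in u_occupied) ne; grid_lia.
have v_late := dest_read_after_min rival not_special u_late.
have [lt_first_v|le_v_first] := boolP (pos_lt 1 p1 v2 v1).
  apply: (word_lt_after_move u_in v_in frame src_le dst_gt v_before_u wit (Sl := 1) (Sp := p1));
    by [grid_lia | left | move: u_late v_late; grid_lia].
apply: (word_lt_after_move u_in v_in frame src_le dst_gt v_before_u wit (Sl := v2) (Sp := v1));
  by [| right | move: u_late v_late; grid_lia].
Qed.

Let lt_src_matches_first r Tl Tp : r \notin [:: DA; DC] -> lt_witness n r f f Tl Tp ->
  entry n r f 1 p1 != 0 -> pos_l n r p2 l2 = 1 -> pos_p n r p2 l2 = p1 ->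
  lexlt (word n r g) (word n DA g).
Proof.
move=> rival wit nz el ep.
have [_ entry_one _] := witness_tie first_in first_one f_empty first_before_u between wit nz.
have src_one : f p2 l2 = 1 by rewrite -(entry_pos r f u_in) el ep.
have v_late := dest_read_after_first rival el ep.
apply: (@word_lt_of_vacant_prefix _ _ _ 1 p1); [by grid_lia | | by rewrite -lt0n first_kept].
move=> i j ij le_first.
have [[-> ->]|ne_u] := altP ((i, j) =P (p2, l2)); first exact: src_vacated.
rewrite frame //; last by apply: contraNneq le_first => -[-> ->].
apply/eqP; apply: contraT => nz_ij; have := robot_not_before f_empty wit ij nz_ij.
move=> le_ij; have [ei ej] : i = p2 /\ j = l2.
  by apply: (pos_inj (r := r) ij u_in); rewrite ?el ?ep; move: le_first le_ij; grid_lia.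
by move: ne_u; rewrite ei ej eqxx.
Qed.

Let lt_other_matches_first r Tl Tp : r \notin [:: DA; DC] -> lt_witness n r f f Tl Tp ->
  entry n r f 1 p1 != 0 -> (pos_l n r p2 l2, pos_p n r p2 l2) != (1, p1) ->
  lexlt (word n r g) (word n DA g).
Proof.
move=> rival wit nz ne.
have [le_uT _ late] := witness_tie first_in first_one f_empty first_before_u between wit nz.
have u_late := late _ _ u_in u_occupied ne.
have first_occ : f p1 1 != 0 by rewrite first_one.
have first_late := late _ _ first_in first_occ (first_pos_ne rival).
have v_late := dest_read_after_dest rival u_late first_late ne.
apply: (word_lt_after_move u_in v_in frame src_le dst_gt v_before_u wit (Sl := v2) (Sp := v1));
  by [| right; move: le_uT v_before_u; grid_lia | move: u_late v_before_u; grid_lia].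
Qed.

Let lt_special_AB Tl Tp : lt_witness n BA f f Tl Tp -> p1 = h -> p2 = n -> l2 = h + 1 ->
  lexlt (word n AB g) (word n DA g).
Proof.
move=> wit ep1 ep2 el2; have h_gt1 : 1 < h by rewrite -ep1; case/andP: p1_range.
have dE : dest n (p2, l2) = (n, h).
  rewrite /dest ep2 el2 (_ : n./2 = h); last by rewrite n_even addnn doubleK.
  by case: ifP => [|_]; [lia | rewrite addn1].
have src_read : entry n BA f 1 p1 = f p2 l2.
  by rewrite /entry /= ep2 el2 ep1 n_even; congr f; lia.
have nz_read : entry n BA f 1 p1 != 0 by rewrite src_read.
have [_ read_one late] :=
  witness_tie first_in first_one f_empty first_before_u between wit nz_read.
have g_src : g p2 l2 = 0 by apply: src_vacated; rewrite -src_read.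
have f_dst : f v1 v2 = 0.
  by rewrite dE /=; apply: between; rewrite ?ep1 ?ep2 ?el2; grid_lia.
have g_dst : g v1 v2 = 1.
  by rewrite /after_move (view_move_dst c ne_uv); move: f_dst; rewrite /view; lia.
move: (first_one) (f_empty) (between) late (frame) g_src g_dst; rewrite dE /=.
set g' := after_move n c (p2, l2); rewrite ep1 ep2 el2.
exact: special_AB_lt n_even h_gt1.
Qed.

Lemma second_robot_move r : r \notin [:: DA; DC] -> lexlt (word n r g) (word n DA g).
Proof.
move=> rival; have [Tl [Tp wit]] : exists l p, lt_witness n r f f l p.
  by apply: asymmetric_witness asym _; case: r rival.
have [special|not_special] := boolP [&& r == AB, p1 == h, p2 == n & l2 == h + 1].
  case/and4P: special => /eqP-> /eqP ep1 /eqP ep2 /eqP el2.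
  have [TBl [TBp witBA]] := asymmetric_witness (r := BA) asym isT.
  exact: lt_special_AB witBA ep1 ep2 el2.
have [zero|nz] := eqVneq (entry n r f 1 p1) 0.
  exact: lt_first_unmatched wit not_special zero.
have [[el ep]|ne] := altP ((pos_l n r p2 l2, pos_p n r p2 l2) =P (1, p1)).
  exact: lt_src_matches_first wit nz el ep.
exact: lt_other_matches_first wit nz ne.
Qed.

End SecondRobotMove.

Lemma occupied_not_corner n f i j : standing n f -> in_grid n i j -> f i j != 0 ->
  1 < i < n \/ 1 < j < n.
Proof.
case=> f11 fn1 f1n fnn _ ij nz.
have [i_end|] := boolP ((i == 1) || (i == n)); last by grid_lia.
have [j_end|] := boolP ((j == 1) || (j == n)); last by grid_lia.
by move: nz; case/orP: i_end => /eqP->; case/orP: j_end => /eqP->; rewrite ?f11 ?fn1 ?f1n ?fnn.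
Qed.

Theorem lemma3 (n : nat) (c : nat -> nat -> nat) (u : nat * nat) :
  ~~ odd n ->
  (forall i j, ~~ in_grid n i j -> c i j = 0) ->
  standing n (view c) ->
  purely_asym n (view c) ->
  u \in duo_nodes n (view c) ->
  0 < c u.1 u.2 ->
  let g := view (move_robot c u (dest n u)) in
  [&& lexlt (lamCD n g) (lamDA n g), lexlt (lamAD n g) (lamDA n g),
      lexlt (lamCB n g) (lamDA n g), lexlt (lamAB n g) (lamDA n g),
      lexlt (lamBA n g) (lamDA n g) & lexlt (lamBC n g) (lamDA n g)].
Proof.
move=> n_even c_out std /and3P[asym _ _] duo c_u; cbv zeta.
have [_ _ _ _ [i [j /and3P[ij _ nz]]]] := std.
set g := view (move_robot c u (dest n u)).
have u_in : in_grid n u.1 u.2 by apply: contraLR c_u => /c_out->.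
have u_occ : view c u.1 u.2 != 0 by rewrite /view; lia.
have [l1 [p1 [lp1 nz1 empty1 find1]]] := first_robot_exists ij nz.
have [el1 p1_range p1_low] := leading_robot_position std asym lp1 nz1 empty1; subst l1.
have [h n_half] : exists h, n = h + h.
  by exists n./2; rewrite addnn -{1}(odd_double_half n) (negbTE n_even).
suff rivals_lose r : r \notin [:: DA; DC] -> lexlt (word n r g) (word n DA g).
  by apply/and3P; split; [exact: (rivals_lose CD) | exact: (rivals_lose AD) |
    apply/and4P; split; [exact: (rivals_lose CB) | exact: (rivals_lose AB) |
                         exact: (rivals_lose BA) | exact: (rivals_lose BC)]].
move=> rival; case: (duo_nodesP lp1 find1 u_in duo) => [u_first|[first_one first_before between]].
  by rewrite /g u_first; exact: first_robot_move asym empty1 nz1 p1_range p1_low rival.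
rewrite {}/g; case: u u_in u_occ first_before between {duo c_u} => p2 l2 /=.
move=> u_in u_occ first_before between.
exact: second_robot_move n_half asym empty1 first_one p1_range p1_low u_in
  (occupied_not_corner std u_in u_occ) u_occ first_before between r rival.
Qed.
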